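(* Consider the unconstrained variational inequality problem of finding $x^*\in\mathbb{R}^d$ with $F(x^* )=0$ for a single-valued operator $F:\mathbb{R}^d\to\mathbb{R}^d$, under the following assumptions: (i) the solution set $\mathcal{X}^*$ is non-empty and there exist $x^*\in\mathcal{X}^*$ and $R\in\mathbb{R}$ with $\|x^*\|\le R$; (ii) $F$ is $\lambda$-weak $\mu$-quasi strongly monotone with $\lambda\ge 0$, $\mu>0$, i.e. $\langle F(x),x-x^*\rangle\ge \mu\|x-x^*\|^2-\lambda$ for all $x\in\mathbb{R}^d$ and some $x^*\in\mathcal{X}^*$; (iii) when SEG is run, $F$ is $L$-Lipschitz, and when SGDA is run, $F$ has at most $B$-linear growth, $\|F(x)\|\le B(1+\|x\|)$ for all $x$; (iv) the algorithm accesses a stochastic oracle returning $F_t=F(x_t)+U_t(x_t)$, where $(U_t(\cdot))_{t\ge0}$ are i.i.d. random fields adapted to a filtration $(\mathcal{F}_t)$ with $\mathbb{E}[U_t(x)\mid\mathcal{F}_t]=0$ and $\mathbb{E}[\|U_t(x)\|^2\mid\mathcal{F}_t]\le\sigma^2$ for all $x$; (v) $U_t(x)=U_t^a(x)+U_t^b(x)$ where $U_t^a(x)$ has a Lebesgue density $p_{U_t^a(x)}$ with $\inf_{x\in C}p_{U_t^a(x)}(t)>0$ for every bounded $C\subseteq\mathbb{R}^d$ and every $t\in\mathbb{R}^d$. Let the iterates be generated either by SGDA, $x_{t+1}=x_t-\gamma(F(x_t)+U_t(x_t))$ with $\gamma<\mu/B^2$, or by SEG, $x_{t+1/2}=x_t-\gamma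 F_t$, $x_{t+1}=x_t-\alpha\gamma F_{t+1/2}$ with $\gamma<1/(2\mu+\sqrt{3}L)$ and $\alpha\in(0,1)$. Then the function $V:\mathbb{R}^d\to\mathbb{R}$, $V(x)=\|x-x^*\|^2+1$, satisfies the following geometric drift property for the Markov chain $(x_t)_{t\ge0}$: there exist a measurable set $C$ and constants $\beta>0$, $b<\infty$ such that \[ \Delta V(x)\le -\beta V(x)+b\,\mathbf{1}_C(x)\quad\text{for all }x\in\mathbb{R}^d, \] where $\Delta V(x)=\int_{y\in\mathbb{R}^d}P(x,dy)V(y)-V(x)$ and $P$ is the (time-homogeneous) transition kernel of the chain.
   Context: SGDA = stochastic gradient descent ascent; SEG = stochastic extragradient (double step-size). The transition kernel is $P(x,S)=\Pr[x_{t+1}\in S\mid x_t=x]$. This property is the (V4) geometric drift condition of Meyn and Tweedie. *)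

(* R^d is modelled as d.-tuple R, which
   carries the library's product (= Borel) sigma-algebra; the Euclidean
   structure is defined explicitly below. *)
From HB Require Import structures.
From mathcomp Require Import all_boot all_order all_algebra.
From mathcomp Require Import all_classical all_reals all_analysis.
Set Implicit Arguments. Unset Strict Implicit. Unset Printing Implicit Defensive.
Import Order.TTheory GRing.Theory Num.Theory.
Local Open Scope classical_set_scope.
Local Open Scope ring_scope.

Section Euclid.
Variables (R : realType) (d : nat).
Definition vzero : d.-tuple R := [tuple (0 : R) | i < d].
Definition vadd (x y : d.-tuple R) : d.-tuple R := [tuple tnth x i + tnth y i | i < d].
Definition vsub (x y : d.-tuple R) : d.-tuple R := [tuple tnth x i - tnth y i | i < d].
Definition vscale (a : R) (x : d.-tuple R) : d.-tuple R := [tuple a * tnth x i | i < d].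
Definition dot (x y : d.-tuple R) : R := \sum_(i < d) tnth x i * tnth y i.
Definition vnorm (x : d.-tuple R) : R := Num.sqrt (dot x x).
End Euclid.

(* Lebesgue integral on R^n of a nonnegative function, defined as the iterated
   one-dimensional Lebesgue integral (Tonelli); n = 0: R^0 is a point. *)
Fixpoint lebint (R : realType) (n : nat) : (n.-tuple R -> \bar R) -> \bar R :=
  match n return (n.-tuple R -> \bar R) -> \bar R with
  | 0 => fun f => f [tuple]
  | n'.+1 => fun f =>
      (\int[@lebesgue_measure R]_t lebint (fun v : n'.-tuple R => f (cons_tuple t v)))%E
  end.

Section Assumptions.
Variables (R : realType) (d : nat).
Local Notation vec := (d.-tuple R).

Definition weak_quasi_strongly_monotone (F : vec -> vec) (lam mu : R) (xs : vec) :=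
  forall x, mu * vnorm (vsub x xs) ^+ 2 - lam <= dot (F x) (vsub x xs).

Definition lipschitz_op (F : vec -> vec) (L : R) :=
  forall x y, vnorm (vsub (F x) (F y)) <= L * vnorm (vsub x y).

Definition linear_growth (F : vec -> vec) (B : R) :=
  forall x, vnorm (F x) <= B * (1 + vnorm x).

Definition bounded_set (C : set vec) := exists M : R, forall x, C x -> vnorm x <= M.

Variables (dO : measure_display) (Omega : measurableType dO) (P : probability Omega R).

(* assumption (iv), for the common law of the i.i.d. fields U_t:
   jointly measurable random field, mean zero, second moment <= sigma^2 *)
Definition noise_field (U : Omega -> vec -> vec) (sigma : R) :=
  measurable_fun [set: Omega * vec] (fun z => U z.1 z.2) /\
  (forall x (i : 'I_d),
     P.-integrable [set: Omega] (fun w => (tnth (U w x) i)%:E) /\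
     (\int[P]_w (tnth (U w x) i)%:E = 0)%E) /\
  (forall x, (\int[P]_w ((vnorm (U w x)) ^+ 2)%:E <= (sigma ^+ 2)%:E)%E).

Definition noise_density (U Ua Ub : Omega -> vec -> vec) (p : vec -> vec -> R) :=
  (forall w x, U w x = vadd (Ua w x) (Ub w x)) /\
  (forall x, measurable_fun [set: Omega] (fun w => Ua w x)) /\
  (forall x t, 0 <= p x t) /\
  (forall x, measurable_fun [set: vec] (p x)) /\
  (forall x (A : set vec), measurable A ->
     P [set w | A (Ua w x)] = lebint (fun t => (\1_A t * p x t)%:E)) /\
  (forall C : set vec, bounded_set C -> forall t : vec,
     exists c : R, 0 < c /\ forall x, C x -> c <= p x t).

Definition sgda_step (F : vec -> vec) (U : Omega -> vec -> vec) (gamma : R)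
  (w : Omega) (x : vec) : vec :=
  vsub x (vscale gamma (vadd (F x) (U w x))).

(* one step of SEG; the half step uses a fresh independent copy of the noise,
   hence the sample space Omega * Omega with the product probability *)
Definition seg_step (F : vec -> vec) (U : Omega -> vec -> vec) (gamma alpha : R)
  (w : Omega * Omega) (x : vec) : vec :=
  let xh := vsub x (vscale gamma (vadd (F x) (U w.1 x))) in
  vsub x (vscale (alpha * gamma) (vadd (F xh) (U w.2 xh))).

Definition sgda_kernel F U gamma (x : vec) : set vec -> \bar R :=
  pushforward P (fun w => sgda_step F U gamma w x).

Definition seg_kernel F U gamma alpha (x : vec) : set vec -> \bar R :=
  pushforward (P \x P)%E (fun w => seg_step F U gamma alpha w x).

End Assumptions.

Definition driftV (R : realType) (d : nat) (K : d.-tuple R -> set (d.-tuple R) -> \bar R)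
  (V : d.-tuple R -> R) (x : d.-tuple R) : \bar R :=
  (\int[K x]_y (V y)%:E - (V x)%:E)%E.

Definition geometric_drift (R : realType) (d : nat)
  (K : d.-tuple R -> set (d.-tuple R) -> \bar R) (V : d.-tuple R -> R) :=
  exists (C : set (d.-tuple R)) (beta b : R),
    measurable C /\ 0 < beta /\
    forall x, (driftV K V x <= (- beta * V x + b * \1_C x)%:E)%E.

Definition Vfun (R : realType) (d : nat) (xs : d.-tuple R) (x : d.-tuple R) : R :=
  vnorm (vsub x xs) ^+ 2 + 1.

From HB Require Import structures.
From mathcomp Require Import all_boot all_order all_algebra.
From mathcomp Require Import all_classical all_reals all_analysis.
From mathcomp Require Import ring lra measurable_realfun.
Import Order.TTheory GRing.Theory Num.Theory.
Local Open Scope classical_set_scope.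
Local Open Scope ring_scope.
Set Implicit Arguments. Unset Strict Implicit. Unset Printing Implicit Defensive.

(* Expanding the square, the noise of a step contributes a cross term, of mean
   zero against any vector chosen before the noise is drawn, and at most
   [c^2 sigma^2] through its second moment.  It therefore suffices to show that
   the noiseless step contracts [|x - x*|^2] up to an additive constant.  For
   SGDA this follows from quasi strong monotonicity once linear growth is
   turned into [|F x|^2 <= B^2 (2 |x - x*|^2 + const)] and [gamma B^2 < mu].
   For SEG monotonicity is applied at the extrapolated point, the Lipschitz
   bound makes the extrapolation error of order [gamma^2 |F_t|^2], and
   [gamma (2 mu + sqrt3 L) < 1] makes its net contribution nonpositive; the
   two independent noises are integrated one after the other (Tonelli).  A bound
   [PV <= (1 - beta) V + b] then yields the drift condition with [beta / 2] on
   the sublevel set [V <= 2 b / beta]. *)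

Section Euclid.
Context (R : realType) (d : nat).
Local Notation vec := (d.-tuple R).
Implicit Types (x y z u v : vec) (a : R).

Lemma tnth_vadd x y i : tnth (vadd x y) i = tnth x i + tnth y i.
Proof. by rewrite tnth_mktuple. Qed.

Lemma tnth_vsub x y i : tnth (vsub x y) i = tnth x i - tnth y i.
Proof. by rewrite tnth_mktuple. Qed.

Lemma tnth_vscale a x i : tnth (vscale a x) i = a * tnth x i.
Proof. by rewrite tnth_mktuple. Qed.

Lemma vsubv0 x : vsub x (vzero R d) = x.
Proof. by apply: eq_from_tnth => i; rewrite tnth_vsub tnth_mktuple subr0. Qed.

Lemma vsubAC x y z : vsub (vsub x y) z = vsub (vsub x z) y.
Proof. by apply: eq_from_tnth => i; rewrite !tnth_vsub; ring. Qed.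

Lemma vsub_vadd x y z : vsub x (vadd y z) = vsub (vsub x y) z.
Proof. by apply: eq_from_tnth => i; rewrite !(tnth_vsub, tnth_vadd); ring. Qed.

Lemma vsub_vscale_vadd x y u a :
  vsub x (vscale a (vadd y u)) = vsub (vsub x (vscale a y)) (vscale a u).
Proof. by apply: eq_from_tnth => i; rewrite !(tnth_vsub, tnth_vscale, tnth_vadd); ring. Qed.

Lemma dotC x y : dot x y = dot y x.
Proof. by apply: eq_bigr => i _; rewrite mulrC. Qed.

Lemma dotDl x y z : dot (vadd x y) z = dot x z + dot y z.
Proof. by rewrite /dot -big_split; apply: eq_bigr => i _; rewrite tnth_vadd mulrDl. Qed.

Lemma dotBl x y z : dot (vsub x y) z = dot x z - dot y z.
Proof. by rewrite /dot -sumrB; apply: eq_bigr => i _; rewrite tnth_vsub mulrBl. Qed.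

Lemma dotZl a x z : dot (vscale a x) z = a * dot x z.
Proof. by rewrite /dot mulr_sumr; apply: eq_bigr => i _; rewrite tnth_vscale mulrA. Qed.

Lemma dotDr x y z : dot z (vadd x y) = dot z x + dot z y.
Proof. by rewrite dotC dotDl !(dotC z). Qed.

Lemma dotBr x y z : dot z (vsub x y) = dot z x - dot z y.
Proof. by rewrite dotC dotBl !(dotC z). Qed.

Lemma dotZr a x z : dot z (vscale a x) = a * dot z x.
Proof. by rewrite dotC dotZl !(dotC z). Qed.

Definition dotE := (dotDl, dotDr, dotBl, dotBr, dotZl, dotZr).

Lemma dot_self_ge0 x : 0 <= dot x x.
Proof. by apply: sumr_ge0 => i _; rewrite -expr2 sqr_ge0. Qed.

Lemma vnorm_ge0 x : 0 <= vnorm x.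
Proof. exact: sqrtr_ge0. Qed.

Lemma sqr_vnorm x : vnorm x ^+ 2 = dot x x.
Proof. by rewrite sqr_sqrtr // dot_self_ge0. Qed.

Lemma vnorm_vsubC x y : vnorm (vsub x y) = vnorm (vsub y x).
Proof.
by rewrite /vnorm /dot; congr Num.sqrt; apply: eq_bigr => i _; rewrite !tnth_vsub; ring.
Qed.

Lemma abs_tnth_le_vnorm x i : `|tnth x i| <= vnorm x.
Proof.
rewrite -sqrtr_sqr ler_sqrt ?dot_self_ge0 // /dot (bigD1 i) //= expr2 lerDl.
by apply: sumr_ge0 => j _; rewrite -expr2 sqr_ge0.
Qed.

Lemma sqr_vnorm_vscale a x : vnorm (vscale a x) ^+ 2 = a ^+ 2 * vnorm x ^+ 2.
Proof. by rewrite !sqr_vnorm dotZl dotZr mulrA -expr2. Qed.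

Lemma sqr_vnorm_vsub_vscale x y a :
  vnorm (vsub x (vscale a y)) ^+ 2 =
  vnorm x ^+ 2 - 2 * a * dot x y + a ^+ 2 * vnorm y ^+ 2.
Proof. by rewrite !sqr_vnorm !dotE (dotC y x); ring. Qed.

Lemma sqr_vnorm_vsub_le x y : vnorm (vsub x y) ^+ 2 <= 2 * vnorm x ^+ 2 + 2 * vnorm y ^+ 2.
Proof.
have := dot_self_ge0 (vadd x y); rewrite !sqr_vnorm !dotE (dotC y x); lra.
Qed.

Lemma sqr_vnorm_le_vsub x y : vnorm x ^+ 2 <= 2 * vnorm (vsub x y) ^+ 2 + 2 * vnorm y ^+ 2.
Proof.
have := dot_self_ge0 (vsub x (vscale 2 y)); rewrite !sqr_vnorm !dotE (dotC y x); lra.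
Qed.
End Euclid.

Section VecMeasurable.
Context (R : realType) (d : nat) (dT : measure_display) (T : measurableType dT).
Local Notation vec := (d.-tuple R).
Implicit Types f g : T -> vec.

Lemma measurable_vadd f g : measurable_fun setT f -> measurable_fun setT g ->
  measurable_fun setT (fun t => vadd (f t) (g t)).
Proof.
move=> /measurable_fun_tnthP mf /measurable_fun_tnthP mg.
apply/measurable_fun_tnthP => i.
move: (measurable_funD (mf i) (mg i)); apply: eq_measurable_fun => t _.
by rewrite /= tnth_vadd.
Qed.

Lemma measurable_vsub f g : measurable_fun setT f -> measurable_fun setT g ->
  measurable_fun setT (fun t => vsub (f t) (g t)).
Proof.
move=> /measurable_fun_tnthP mf /measurable_fun_tnthP mg.
apply/measurable_fun_tnthP => i.
move: (measurable_funB (mf i) (mg i)); apply: eq_measurable_fun => t _.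
by rewrite /= tnth_vsub.
Qed.

Lemma measurable_vscale a f : measurable_fun setT f ->
  measurable_fun setT (fun t => vscale a (f t)).
Proof.
move=> /measurable_fun_tnthP mf; apply/measurable_fun_tnthP => i.
move: (measurable_funM (measurable_cst a) (mf i)); apply: eq_measurable_fun => t _.
by rewrite /= tnth_vscale.
Qed.

Lemma measurable_dot f g : measurable_fun setT f -> measurable_fun setT g ->
  measurable_fun setT (fun t => dot (f t) (g t)).
Proof.
move=> /measurable_fun_tnthP mf /measurable_fun_tnthP mg.
by apply: measurable_sum => i; exact: (measurable_funM (mf i) (mg i)).
Qed.

Lemma measurable_sqr_vnorm f : measurable_fun setT f ->
  measurable_fun setT (fun t => vnorm (f t) ^+ 2).
Proof. by move=> mf; under eq_fun do rewrite sqr_vnorm; exact: measurable_dot. Qed.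

Lemma measurable_vnorm f : measurable_fun setT f ->
  measurable_fun setT (fun t => vnorm (f t)).
Proof.
move=> mf.
exact: measurableT_comp (continuous_measurable_fun (@sqrt_continuous R)) (measurable_dot mf mf).
Qed.

End VecMeasurable.

Section LipschitzMeasurable.
Context (R : realType) (d : nat).
Local Notation vec := (d.-tuple R).

(* [unpickle] enumerates all pairs [(m, k)], so every point of [(Z / (m + 1))^d]
   occurs. *)
Definition rational_point (j : nat) : vec :=
  if unpickle j is Some (m, k) then [tuple (tnth k i)%:~R / m.+1%:R | i < d]
  else vzero R d.

Lemma rational_point_dense (x : vec) (e : R) :
  0 < e -> exists j, vnorm (vsub x (rational_point j)) < e.
Proof.
move=> e0.
have e20 : 0 < e ^+ 2 by rewrite exprn_gt0.
pose m := Num.Def.archi_bound (d%:R / e ^+ 2).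
have hm : d%:R / e ^+ 2 < m%:R by apply: archi_boundP; rewrite divr_ge0 // ltW.
pose M : R := m.+1%:R.
have M0 : 0 < M by rewrite ltr0n.
pose k : d.-tuple int := [tuple Num.floor (M * tnth x i) | i < d].
exists (pickle (m, k)); rewrite /rational_point pickleK.
have coord_le i : tnth (vsub x [tuple (tnth k i0)%:~R / M | i0 < d]) i ^+ 2 <= M^-1 ^+ 2.
  rewrite tnth_vsub !tnth_mktuple; have /andP[fl fu] := floor_itv (M * tnth x i).
  rewrite intrD mulr1z in fu.
  have lo : 0 <= tnth x i - (Num.floor (M * tnth x i))%:~R / M.
    by rewrite subr_ge0 ler_pdivrMr // [_ * M]mulrC.
  have hi : tnth x i - (Num.floor (M * tnth x i))%:~R / M <= M^-1.
    rewrite -(ler_pM2r M0) mulrBl divfK ?mulVf ?gt_eqF //; lra.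
  by rewrite !expr2 ler_pM.
rewrite -[e]ger0_norm ?ltW // -sqrtr_sqr ltr_sqrt //.
apply: (@le_lt_trans _ _ (\sum_(i < d) M^-1 ^+ 2)).
  by apply: ler_sum => i _; rewrite -expr2; exact: coord_le.
rewrite sumr_const card_ord -mulr_natr exprVn mulrC ltr_pdivrMr ?exprn_gt0 //.
have hM : d%:R < e ^+ 2 * M.
  rewrite -ltr_pdivrMl // mulrC; apply: (lt_le_trans hm).
  by rewrite /M ler_nat.
have M1 : 1 <= M by rewrite /M ler1n.
nra.
Qed.

(* [g] is the infimum of the countably many measurable cones
   [x |-> g z + K |x - z|] with rational vertices [z]. *)
Lemma lipschitz_fun_measurable (g : vec -> R) (K : R) : 0 <= K ->
  (forall x z, g x <= g z + K * vnorm (vsub x z)) -> measurable_fun setT g.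
Proof.
move=> K0 gK.
pose cone j x := g (rational_point j) + K * vnorm (vsub x (rational_point j)).
have mcone j : measurable_fun setT (cone j).
  apply: measurable_funD => //; apply: measurable_funM => //.
  exact/measurable_vnorm/measurable_vsub.
have lb x : has_lbound (range (cone ^~ x)) by exists (g x) => _ [j _ <-]; exact: gK.
apply: eq_measurable_fun (measurable_fun_infs 0 (fun x _ => lb x) mcone) => x _.
have lb0 : has_lbound (sdrop (cone ^~ x) 0) by exists (g x) => _ [j _ <-]; exact: gK.
apply/eqP; rewrite eq_le; apply/andP; split.
  apply/ler_addgt0Pr => e e0.
  have K1 : 0 < 2 * K + 1 by lra.
  have [j hj] := rational_point_dense x (divr_gt0 e0 K1).
  apply: (@le_trans _ _ (cone j x)); first by apply: ge_inf => //; exists j.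
  have := gK (rational_point j) x; rewrite vnorm_vsubC.
  move: hj; rewrite ltr_pdivlMr //.
  rewrite /cone; have := vnorm_ge0 (vsub x (rational_point j)); nra.
apply: lb_le_inf => //; first by exists (cone 0%N x), 0%N.
by move=> _ [j _ <-]; exact: gK.
Qed.

Lemma lipschitz_op_measurable (F : vec -> vec) (L : R) :
  lipschitz_op F L -> measurable_fun setT F.
Proof.
move=> FL; apply/measurable_fun_tnthP => i.
apply: (@lipschitz_fun_measurable _ `|L|) => // x z /=.
have := abs_tnth_le_vnorm (vsub (F x) (F z)) i; rewrite tnth_vsub.
have := ler_wpM2r (vnorm_ge0 (vsub x z)) (ler_norm L).
have := FL x z; have := ler_norm (tnth (F x) i - tnth (F z) i); lra.
Qed.

End LipschitzMeasurable.

Section Drift.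
Context (R : realType) (d : nat).
Local Notation vec := (d.-tuple R).

(* Off the sublevel set [C = {V <= 2 b / beta}], the constant [b] is absorbed
   by half of the contraction. *)
Lemma geometric_drift_of_contraction (K : vec -> set vec -> \bar R) (V : vec -> R)
    (beta b : R) :
  measurable_fun setT V -> (forall x, 0 <= V x) -> 0 < beta ->
  (forall x, (\int[K x]_y (V y)%:E <= ((1 - beta) * V x + b)%:E)%E) ->
  geometric_drift K V.
Proof.
move=> mV V0 beta0 KV.
exists (V @^-1` `]-oo, 2 * b / beta]), (beta / 2), b; split; last split.
- by rewrite -[_ @^-1` _]setTI; apply: mV => //; exact: measurable_itv.
- by rewrite divr_gt0.
move=> x; apply: le_trans (leeD2r _ (KV x)) _; rewrite -EFinD lee_fin indicE.
have [xC|xC] := boolP (x \in _); move: xC; rewrite ?notin_setE ?in_setE /= in_itv /= => xC.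
  by have := mulr_ge0 (ltW beta0) (V0 x); lra.
by move: xC => /negP; rewrite -ltNge ltr_pdivrMr // mulrC; lra.
Qed.

End Drift.

Lemma measurable_Vfun (R : realType) (d : nat) (xs : d.-tuple R) :
  measurable_fun setT (Vfun xs).
Proof. by apply: measurable_funD => //; exact/measurable_sqr_vnorm/measurable_vsub. Qed.

Lemma Vfun_ge0 (R : realType) (d : nat) (xs x : d.-tuple R) : 0 <= Vfun xs x.
Proof. by rewrite addr_ge0 ?sqr_ge0. Qed.

Section Noise.
Local Open Scope ereal_scope.
Context (R : realType) (d : nat) (dO : measure_display) (Omega : measurableType dO)
  (P : probability Omega R) (U : Omega -> d.-tuple R -> d.-tuple R) (sigma : R).
Hypothesis hU : noise_field P U sigma.
Local Notation vec := (d.-tuple R).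

Lemma measurable_noise_jointly : measurable_fun setT (fun z : Omega * vec => U z.1 z.2).
Proof. by case: hU. Qed.

Lemma measurable_noise (y : vec) : measurable_fun setT (U ^~ y).
Proof. exact: measurableT_comp measurable_noise_jointly (pair2_measurable y). Qed.

Lemma measurable_noisy_step (x y u : vec) (c : R) :
  measurable_fun setT (fun w => vsub x (vscale c (vadd y (U w u)))).
Proof. exact/measurable_vsub/measurable_vscale/measurable_vadd/measurable_noise. Qed.

Lemma integrable_sqr_vnorm_noise (y : vec) :
  P.-integrable setT (fun w => (vnorm (U w y) ^+ 2)%:E).
Proof.
apply/integrableP; split; first exact/measurable_EFinP/measurable_sqr_vnorm/measurable_noise.
under eq_integral do rewrite gee0_abs ?lee_fin ?sqr_ge0 //.
by case: hU => _ [_ /(_ y) U2]; exact: le_lt_trans U2 (ltry _).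
Qed.

Lemma integral_sqr_vnorm_noise_le (y : vec) :
  \int[P]_w (vnorm (U w y) ^+ 2)%:E <= (sigma ^+ 2)%:E.
Proof. by case: hU => _ [_]; apply. Qed.

Lemma integrable_coord_noise (y : vec) i :
  P.-integrable setT (fun w => (tnth (U w y) i)%:E).
Proof. by case: hU => _ [/(_ y i) []]. Qed.

Lemma integrable_dot_noise (a y : vec) : P.-integrable setT (fun w => (dot a (U w y))%:E).
Proof.
under eq_fun do rewrite /dot -sumEFin.
apply: integrable_sum => // i _; under eq_fun do rewrite EFinM.
exact/integrableZl/integrable_coord_noise.
Qed.

Lemma integral_dot_noise (a y : vec) : \int[P]_w (dot a (U w y))%:E = 0.
Proof.
under eq_integral do rewrite /dot -sumEFin.
rewrite integral_sum //; last first.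
  by move=> i; under eq_fun do rewrite EFinM; exact/integrableZl/integrable_coord_noise.
apply: big1 => i _; under eq_integral do rewrite EFinM.
rewrite integralZl //; last exact: integrable_coord_noise.
by case: hU => _ [/(_ y i) [_ ->] _]; rewrite mule0.
Qed.

Lemma integral_cst_probability (c : R) : \int[P]_w c%:E = c%:E.
Proof. by rewrite -[RHS]mule1 -(probability_setT P); exact: integral_cst. Qed.

Lemma integral_affine_sqr_vnorm_noise_le (C c : R) (y : vec) : (0 <= c)%R ->
  \int[P]_w (C + c * vnorm (U w y) ^+ 2)%:E <= (C + c * sigma ^+ 2)%:E.
Proof.
move=> c0; have i2 := integrable_sqr_vnorm_noise y.
under eq_integral do rewrite EFinD EFinM.
rewrite integralD //; last 2 first.
- exact: finite_measure_integrable_cst.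
- exact: integrableZl.
rewrite integralZl // integral_cst_probability EFinD (EFinM c).
apply/leeD2l/lee_wpmul2l; first by rewrite lee_fin.
exact: integral_sqr_vnorm_noise_le.
Qed.

Lemma integral_noisy_step_le (x y u : vec) (c : R) :
  \int[P]_w (vnorm (vsub x (vscale c (vadd y (U w u)))) ^+ 2 + 1)%:E
  <= (vnorm (vsub x (vscale c y)) ^+ 2 + c ^+ 2 * sigma ^+ 2 + 1)%:E.
Proof.
set z := vsub x (vscale c y).
have expand w : (vnorm (vsub x (vscale c (vadd y (U w u)))) ^+ 2 + 1)%:E =
    (vnorm z ^+ 2 + 1 + c ^+ 2 * vnorm (U w u) ^+ 2)%:E + (- 2 * c)%:E * (dot z (U w u))%:E.
  by rewrite vsub_vscale_vadd sqr_vnorm_vsub_vscale -EFinM -EFinD; congr EFin; ring.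
under eq_integral do rewrite expand.
rewrite integralD //; last 2 first.
- under eq_fun do rewrite EFinD EFinM.
  apply: integrableD => //; first exact: finite_measure_integrable_cst.
  exact/integrableZl/integrable_sqr_vnorm_noise.
- exact/integrableZl/integrable_dot_noise.
rewrite integralZl //; last exact: integrable_dot_noise.
rewrite integral_dot_noise mule0 adde0.
rewrite (_ : _ + _ + 1 = vnorm z ^+ 2 + 1 + c ^+ 2 * sigma ^+ 2)%R; last by ring.
exact/integral_affine_sqr_vnorm_noise_le/sqr_ge0.
Qed.

End Noise.

Section SGDA.
Context (R : realType) (d : nat).
Local Notation vec := (d.-tuple R).
Context (F : vec -> vec) (xs : vec) (lam mu B : R).
Hypotheses (FB : linear_growth F B) (Fmono : weak_quasi_strongly_monotone F lam mu xs).

(* The coefficient 2 of [|x - x*|^2] is the largest that [gamma B^2 < mu] allows. *)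
Lemma linear_growth_sqr_vnorm_le x :
  vnorm (F x) ^+ 2 <= B ^+ 2 * (2 * vnorm (vsub x xs) ^+ 2 + 6 * vnorm xs ^+ 2 + 4).
Proof.
have Fx_le : vnorm (F x) ^+ 2 <= B ^+ 2 * (1 + vnorm x) ^+ 2.
  rewrite -exprMn; apply: lerXn2r; rewrite ?nnegrE ?vnorm_ge0 ?FB //.
  exact: le_trans (vnorm_ge0 _) (FB x).
apply: le_trans Fx_le _; rewrite ler_wpM2l ?sqr_ge0 //.
have young : 3 * vnorm x ^+ 2 <= 4 * vnorm (vsub x xs) ^+ 2 + 12 * vnorm xs ^+ 2.
  have := dot_self_ge0 (vsub (vsub x xs) (vscale 3 xs)).
  by rewrite !sqr_vnorm !dotE (dotC xs x); lra.
have := sqr_ge0 (vnorm x - 2); lra.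
Qed.

Lemma sgda_mean_step_le gamma x : 0 <= gamma ->
  vnorm (vsub (vsub x xs) (vscale gamma (F x))) ^+ 2 <=
  (1 - 2 * gamma * (mu - gamma * B ^+ 2)) * vnorm (vsub x xs) ^+ 2
  + 2 * gamma * lam + gamma ^+ 2 * B ^+ 2 * (6 * vnorm xs ^+ 2 + 4).
Proof.
move=> g0; rewrite sqr_vnorm_vsub_vscale.
have mono := ler_wpM2l (mulr_ge0 (ler0n _ 2) g0) (Fmono x); rewrite dotC in mono.
have growth := ler_wpM2l (sqr_ge0 gamma) (linear_growth_sqr_vnorm_le x).
lra.
Qed.

End SGDA.

Section SGDADrift.
Context (R : realType) (d : nat) (dO : measure_display) (Omega : measurableType dO)
  (P : probability Omega R) (U : Omega -> d.-tuple R -> d.-tuple R) (sigma : R).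
Hypothesis hU : noise_field P U sigma.
Local Notation vec := (d.-tuple R).
Context (F : vec -> vec) (xs : vec) (lam mu : R).
Hypothesis (Fmono : weak_quasi_strongly_monotone F lam mu xs).

Lemma sgda_integral_Vfun_le gamma x :
  (\int[sgda_kernel P F U gamma x]_y (Vfun xs y)%:E <=
   (vnorm (vsub (vsub x xs) (vscale gamma (F x))) ^+ 2 + gamma ^+ 2 * sigma ^+ 2 + 1)%:E)%E.
Proof.
rewrite ge0_integral_pushforward //; last 3 first.
- exact: (measurable_noisy_step hU x (F x) x gamma).
- by apply/measurable_EFinP; exact: measurable_Vfun.
- by move=> y _; rewrite lee_fin Vfun_ge0.
rewrite preimage_setT.
under eq_integral do rewrite /= /Vfun /sgda_step vsubAC.
exact: integral_noisy_step_le.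
Qed.

Lemma sgda_geometric_drift B gamma : linear_growth F B -> 0 < gamma -> gamma < mu / B ^+ 2 ->
  geometric_drift (sgda_kernel P F U gamma) (Vfun xs).
Proof.
move=> FB g0 gB.
have gB2 : gamma * B ^+ 2 < mu.
  have [B0|B0] := eqVneq (B ^+ 2) 0; first by move: gB; rewrite B0 invr0 mulr0; lra.
  by rewrite -ltr_pdivlMr // lt_def B0 sqr_ge0.
pose beta := 2 * gamma * (mu - gamma * B ^+ 2).
pose b := beta + 2 * gamma * lam + gamma ^+ 2 * B ^+ 2 * (6 * vnorm xs ^+ 2 + 4)
  + gamma ^+ 2 * sigma ^+ 2.
apply: (@geometric_drift_of_contraction _ _ _ _ beta b (measurable_Vfun xs) (Vfun_ge0 xs)).
  by rewrite !mulr_gt0 // subr_gt0.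
move=> x; apply: (le_trans (sgda_integral_Vfun_le gamma x)).
rewrite lee_fin /Vfun; have := sgda_mean_step_le FB Fmono x (ltW g0).
rewrite /b /beta; lra.
Qed.

End SGDADrift.

(* Since [gamma sqrt3 L < 1], [2 L^2 gamma^2 = 2/3 (gamma sqrt3 L)^2 <= 2/3 gamma sqrt3 L]. *)
Lemma seg_stepsize_le (R : realType) (mu L gamma : R) : 0 < mu -> 0 <= L -> 0 < gamma ->
  gamma < 1 / (2 * mu + Num.sqrt 3 * L) -> 2 * L ^+ 2 * gamma ^+ 2 + 2 * gamma * mu <= 1.
Proof.
move=> mu0 L0 g0; set t := Num.sqrt 3 * L.
have t0 : 0 <= t by rewrite mulr_ge0 ?sqrtr_ge0.
have t2 : t ^+ 2 = 3 * L ^+ 2 by rewrite exprMn sqr_sqrtr ?ler0n.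
rewrite ltr_pdivlMr ?ltr_wpDr ?mulr_gt0 // => gt.
have gt_le : (gamma * t) ^+ 2 <= gamma * t.
  rewrite expr2 ler_piMr ?mulr_ge0 ?(ltW g0) //; have := mulr_gt0 g0 mu0; lra.
have : 3 * (2 * L ^+ 2 * gamma ^+ 2) = 2 * (gamma * t) ^+ 2 by rewrite exprMn t2; ring.
have := mulr_ge0 (ltW g0) t0; lra.
Qed.

Lemma lipschitz_op_lt0_vnorm (R : realType) (d : nat) (F : d.-tuple R -> d.-tuple R) L :
  lipschitz_op F L -> L < 0 -> forall v : d.-tuple R, vnorm v = 0.
Proof.
move=> FL L0 v; have := FL v (vzero R d); rewrite vsubv0.
have := vnorm_ge0 (vsub (F v) (F (vzero R d))); have := vnorm_ge0 v.
move=> v0 Fv0 Fv; apply/eqP; rewrite eq_le v0 andbT; nra.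
Qed.

Section SEG.
Context (R : realType) (d : nat).
Local Notation vec := (d.-tuple R).
Context (F : vec -> vec) (xs : vec) (lam mu L gamma alpha : R).
Hypotheses (Fmono : weak_quasi_strongly_monotone F lam mu xs) (FL : lipschitz_op F L).
Hypotheses (mu0 : 0 < mu) (g0 : 0 < gamma) (gL : gamma < 1 / (2 * mu + Num.sqrt 3 * L)).
Hypotheses (a0 : 0 < alpha) (a1 : alpha <= 1).

Lemma seg_residual_le0 (v : vec) :
  alpha * gamma ^+ 2 * vnorm v ^+ 2 * (2 * L ^+ 2 * gamma ^+ 2 + 2 * gamma * mu - 1) <= 0.
Proof.
have [L0|L0] := leP 0 L.
  apply: mulr_ge0_le0; first exact: mulr_ge0 (mulr_ge0 (ltW a0) (sqr_ge0 _)) (sqr_ge0 _).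
  by have := seg_stepsize_le mu0 L0 g0 gL; lra.
by rewrite (lipschitz_op_lt0_vnorm FL L0 v) expr0n /= !mulr0 mul0r.
Qed.

Lemma seg_mean_step_le (x u : vec) :
  vnorm (vsub (vsub x xs) (vscale (alpha * gamma)
     (F (vsub x (vscale gamma (vadd (F x) u)))))) ^+ 2 <=
  (1 - alpha * gamma * mu) * vnorm (vsub x xs) ^+ 2 + 2 * alpha * gamma * lam
  + 2 * alpha * gamma ^+ 2 * vnorm u ^+ 2.
Proof.
set g := vadd (F x) u; set xh := vsub x (vscale gamma g); set h := F xh.
set r := vsub x xs; set s := vsub r (vscale gamma g).
have mono : mu * vnorm s ^+ 2 - lam <= dot h s.
  by have := Fmono xh; rewrite /xh vsubAC.
have cross : dot r h = dot h s + gamma * dot g h.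
  by rewrite /s dotBr dotZr (dotC r h) (dotC g h); ring.
have polar : vnorm (vsub h g) ^+ 2 = vnorm h ^+ 2 - 2 * dot g h + vnorm g ^+ 2.
  by rewrite !sqr_vnorm dotBl !dotBr (dotC h g); ring.
have extrapolation : vnorm (vsub h g) ^+ 2 <=
    2 * (L ^+ 2 * (gamma ^+ 2 * vnorm g ^+ 2)) + 2 * vnorm u ^+ 2.
  rewrite /g vsub_vadd -/g; apply: le_trans (sqr_vnorm_vsub_le _ u) _.
  have : vnorm (vsub xh x) ^+ 2 = gamma ^+ 2 * vnorm g ^+ 2.
    by rewrite -sqr_vnorm_vscale !sqr_vnorm !dotE; ring.
  move=> <-; rewrite -exprMn lerD2r ler_pM2l // lerXn2r ?nnegrE ?vnorm_ge0 ?FL //.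
  exact: le_trans (vnorm_ge0 _) (FL xh x).
have split : vnorm r ^+ 2 <= 2 * vnorm s ^+ 2 + 2 * (gamma ^+ 2 * vnorm g ^+ 2).
  by rewrite -sqr_vnorm_vscale; exact: sqr_vnorm_le_vsub.
have ag0 : 0 <= alpha * gamma by rewrite mulr_ge0 ?ltW.
have := ler_wpM2l (mulr_ge0 (ler0n _ 2) ag0) mono.
have := ler_wpM2l (mulr_ge0 ag0 (ltW mu0)) split.
have := ler_wpM2l (mulr_ge0 ag0 (ltW g0)) extrapolation.
have : (alpha * gamma) ^+ 2 * vnorm h ^+ 2 <= alpha * gamma ^+ 2 * vnorm h ^+ 2.
  rewrite [leLHS](_ : _ = alpha * (alpha * gamma ^+ 2 * vnorm h ^+ 2)); last by ring.
  by rewrite ler_piMl // mulr_ge0 ?sqr_ge0 // mulr_ge0 ?sqr_ge0 // ltW.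
have := seg_residual_le0 g.
rewrite sqr_vnorm_vsub_vscale cross -/h polar.
lra.
Qed.

End SEG.

Section SEGDrift.
Context (R : realType) (d : nat) (dO : measure_display) (Omega : measurableType dO)
  (P : probability Omega R) (U : Omega -> d.-tuple R -> d.-tuple R) (sigma : R).
Hypothesis hU : noise_field P U sigma.
Local Notation vec := (d.-tuple R).
Context (F : vec -> vec) (xs : vec) (lam mu : R).
Hypotheses (mu0 : 0 < mu) (Fmono : weak_quasi_strongly_monotone F lam mu xs).

Lemma measurable_seg_step L gamma alpha (x : vec) : lipschitz_op F L ->
  measurable_fun setT (fun w => seg_step F U gamma alpha w x).
Proof.
move=> /lipschitz_op_measurable mF.
pose xh w1 := vsub x (vscale gamma (vadd (F x) (U w1 x))).
have mxh : measurable_fun setT xh := measurable_noisy_step hU x (F x) x gamma.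
change (measurable_fun setT (fun w : Omega * Omega =>
  vsub x (vscale (alpha * gamma) (vadd (F (xh w.1)) (U w.2 (xh w.1)))))).
apply/measurable_vsub/measurable_vscale/measurable_vadd => //.
  exact: measurableT_comp mF (measurableT_comp mxh measurable_fst).
exact: (measurableT_comp (measurable_noise_jointly hU)
  (measurable_fun_pair measurable_snd (measurableT_comp mxh measurable_fst))).
Qed.

Lemma seg_integral_Vfun_le L gamma alpha x : lipschitz_op F L ->
  0 < gamma -> gamma < 1 / (2 * mu + Num.sqrt 3 * L) -> 0 < alpha <= 1 ->
  (\int[seg_kernel P F U gamma alpha x]_y (Vfun xs y)%:E <=
   ((1 - alpha * gamma * mu) * vnorm (vsub x xs) ^+ 2 + 2 * alpha * gamma * lam
    + (alpha * gamma) ^+ 2 * sigma ^+ 2 + 2 * alpha * gamma ^+ 2 * sigma ^+ 2 + 1)%:E)%E.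
Proof.
move=> FL g0 gL /andP[a0 a1].
rewrite ge0_integral_pushforward //; last 3 first.
- exact: measurable_seg_step FL.
- by apply/measurable_EFinP; exact: measurable_Vfun.
- by move=> y _; rewrite lee_fin Vfun_ge0.
rewrite preimage_setT; set f := (fun y => _) \o _.
have mf : measurable_fun setT f.
  apply: measurableT_comp (measurable_seg_step _ _ x FL).
  by apply/measurable_EFinP; exact: measurable_Vfun.
have f0 w : (0 <= f w)%E by rewrite lee_fin Vfun_ge0.
rewrite (fubini_tonelli1 f mf f0).
pose C := (1 - alpha * gamma * mu) * vnorm (vsub x xs) ^+ 2 + 2 * alpha * gamma * lam
  + (alpha * gamma) ^+ 2 * sigma ^+ 2 + 1.
have c0 : 0 <= 2 * alpha * gamma ^+ 2 by rewrite !mulr_ge0 ?sqr_ge0 // ltW.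
apply: (@le_trans _ _ (\int[P]_w1 (C + 2 * alpha * gamma ^+ 2 * vnorm (U w1 x) ^+ 2)%:E)%E).
  apply: ge0_le_integral => //.
  - by move=> w1 _; apply: integral_ge0 => w2 _; exact: f0.
  - exact: measurable_fun_fubini_tonelli_F.
  - apply/measurable_EFinP; apply: measurable_funD => //; apply: measurable_funM => //.
    exact/measurable_sqr_vnorm/(measurable_noise hU).
  move=> w1 _; rewrite /fubini_F.
  under eq_integral => w2 _ do rewrite /f /= /Vfun /seg_step /= vsubAC.
  set xh := vsub x (vscale gamma (vadd (F x) (U w1 x))).
  apply: (le_trans (integral_noisy_step_le hU (vsub x xs) (F xh) xh (alpha * gamma))).
  rewrite lee_fin /C; have := seg_mean_step_le Fmono FL mu0 g0 gL a0 a1 x (U w1 x).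
  lra.
apply: (le_trans (integral_affine_sqr_vnorm_noise_le hU C x c0)).
by rewrite lee_fin /C; lra.
Qed.

Lemma seg_geometric_drift L gamma alpha : lipschitz_op F L ->
  0 < gamma -> gamma < 1 / (2 * mu + Num.sqrt 3 * L) -> 0 < alpha < 1 ->
  geometric_drift (seg_kernel P F U gamma alpha) (Vfun xs).
Proof.
move=> FL g0 gL /andP[a0 a1].
pose beta := alpha * gamma * mu.
pose b := beta + 2 * alpha * gamma * lam + (alpha * gamma) ^+ 2 * sigma ^+ 2
  + 2 * alpha * gamma ^+ 2 * sigma ^+ 2.
apply: (@geometric_drift_of_contraction _ _ _ _ beta b (measurable_Vfun xs) (Vfun_ge0 xs)).
  by rewrite !mulr_gt0.
move=> x; have a01 : 0 < alpha <= 1 by rewrite a0 ltW.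
apply: (le_trans (seg_integral_Vfun_le x FL g0 gL a01)).
by rewrite lee_fin /b /beta /Vfun; lra.
Qed.

End SEGDrift.

Unset Implicit Arguments. Set Strict Implicit.

Theorem corollary2 (R : realType) (d : nat) (dO : measure_display)
  (Omega : measurableType dO) (P : probability Omega R)
  (F : d.-tuple R -> d.-tuple R) (xs : d.-tuple R) (Rad lam mu sigma : R)
  (U Ua Ub : Omega -> d.-tuple R -> d.-tuple R) (p : d.-tuple R -> d.-tuple R -> R) :
  (* (i) *)
  (exists x0 : d.-tuple R, F x0 = vzero R d /\ vnorm x0 <= Rad) ->
  (* (ii) *)
  F xs = vzero R d -> 0 <= lam -> 0 < mu ->
  weak_quasi_strongly_monotone F lam mu xs ->
  (* (iv), (v) *)
  noise_field P U sigma ->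
  noise_density P U Ua Ub p ->
  (* SGDA *)
  (forall B gamma : R, linear_growth F B -> 0 < gamma -> gamma < mu / B ^+ 2 ->
     geometric_drift (sgda_kernel P F U gamma) (Vfun xs))
  /\
  (* SEG *)
  (forall L gamma alpha : R, lipschitz_op F L ->
     0 < gamma -> gamma < 1 / (2 * mu + Num.sqrt 3 * L) -> 0 < alpha < 1 ->
     geometric_drift (seg_kernel P F U gamma alpha) (Vfun xs)).
Proof.
move=> _ _ _ mu0 Fmono hU _; split.
- by move=> B gamma FB g0 gB; apply: (sgda_geometric_drift hU Fmono FB g0 gB).
- by move=> L gamma alpha FL g0 gL a01; apply: (seg_geometric_drift hU mu0 Fmono FL g0 gL a01).
Qed.
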